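(* There is an absolute constant $C>0$ such that for every $N\in\mathbb{N}$, all functions $f_0,f_1\colon\mathbb{Z}\to\mathbb{C}$ with $|f_i|\le1$ supported in $[\pm2N^2]$, and every $f_2\colon\mathbb{Z}\to\mathbb{C}$ with $|f_2|\le1$ supported in $[N]$, \[ \Big|\mathbb{E}_{x\in[\pm2N^2],\,n\in[N]}f_0(x)f_1(x+n^2)f_2(n)\Big|\le CN^{-1/2}\|f_2\|_{U^3}. \]
   Context: $[N]=\{1,\dots,N\}$, $[\pm N]=[-N,N]\cap\mathbb{Z}$, $\mathbb{E}_{a\in A}$ is the average over the finite set $A$. For $f\colon\mathbb{Z}\to\mathbb{C}$ and $h\in\mathbb{Z}$, $\Delta_hf(x)=f(x)\overline{f(x+h)}$, $\Delta_{h_1,\dots,h_s}=\Delta_{h_1}\cdots\Delta_{h_s}$. For finitely supported $f$, the unnormalised Gowers norm is $\|f\|_{U^s}=\big(\sum_{x,h_1,\dots,h_s\in\mathbb{Z}}\Delta_{h_1,\dots,h_s}f(x)\big)^{1/2^s}$. *)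

From HB Require Import structures.
From mathcomp Require Import all_boot all_order all_algebra.
From mathcomp Require Import complex.
From mathcomp Require Import classical_sets fsbigop reals exp.
Set Implicit Arguments. Unset Strict Implicit. Unset Printing Implicit Defensive.
Import Order.TTheory GRing.Theory Num.Theory.
Local Open Scope ring_scope.

Definition in_pm (M : int) (x : int) : bool := (- M <= x) && (x <= M).
Definition in_1N (N : int) (x : int) : bool := (1 <= x) && (x <= N).

Definition supported_in {V : nmodType} (f : int -> V) (S : int -> bool) : Prop :=
  forall x, f x != 0 -> S x.

Definition Delta (R : rcfType) (h : int) (f : int -> R[i]) : int -> R[i] :=
  fun x => f x * (f (x + h))^*.

(* Σ_{x,h1,h2,h3 ∈ Z} Δ_{h1,h2,h3} f(x), as a finitely supported sum over Z^4
   (fsbig: the sum over the finite support of the summand). *)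
Definition gowers3_sum (R : realType) (f : int -> R[i]) : R[i] :=
  (\sum_(t \in [set: int * int * int * int])
     Delta t.1.1.2 (Delta t.1.2 (Delta t.2 f)) t.1.1.1)%R.

(* unnormalised Gowers U^3 norm: (Σ ...)^(1/8); the sum is a nonnegative real *)
Definition gowersU3 (R : realType) (f : int -> R[i]) : R :=
  powR (complex.Re (gowers3_sum f)) (8%:R^-1).

Definition avg_lemma35 (R : realType) (N : nat) (f0 f1 f2 : int -> R[i]) : R[i] :=
  let M := (2 * N ^ 2)%N in
  ((M.*2.+1 * N)%:R)^-1 *
  \sum_(k < M.*2.+1) \sum_(j < N)
     f0 (k%:Z - M%:Z) * f1 (k%:Z - M%:Z + (j.+1)%:Z ^+ 2) * f2 (j.+1)%:Z.

From mathcomp Require Import all_boot all_order all_algebra.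
From mathcomp Require Import complex.
From mathcomp Require Import classical_sets fsbigop reals exp.
From mathcomp Require Import zify ring lra.
Import Order.TTheory GRing.Theory Num.Theory.
Local Open Scope ring_scope.
Local Open Scope complex_scope.

(* Three applications of the Cauchy-Schwarz inequality.  The first, in x, removes f0 and
   leaves the sum over x of |sum_n f1(x + n^2) f2(n)|^2; expanding the square and writing
   m = n + h turns it into a correlation of f1 with weights Delta_h f2.  The second, in
   (h, x), removes f1 up to its autocorrelation at the shift 2kh, because the second
   difference of n |-> n^2 is constant; that autocorrelation is bounded trivially.  The
   third, in (h, k), produces the U^3 sum of f2.  Each step costs the size of a window,
   [+-5N^2] for x and [+-N] for the shifts, so |sum|^8 <~ N^20 |f2|_U3^8, while the
   normalisation of the average is about 4N^3. *)

Definition int_range (a : int) (n : nat) : seq int := [seq a + i%:Z | i <- iota 0 n].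

Lemma mem_int_range a n x : (x \in int_range a n) = (a <= x < a + n%:Z).
Proof.
apply/mapP/andP => [[k] | [ax xan]].
  by rewrite mem_iota => /andP[_ ?] ->; split; lia.
by exists `|x - a|%N; [rewrite mem_iota; apply/andP; split; lia | lia].
Qed.

Lemma int_range_uniq a n : uniq (int_range a n).
Proof. by rewrite map_inj_uniq ?iota_uniq // => i j /addrI []. Qed.

Lemma size_int_range a n : size (int_range a n) = n.
Proof. by rewrite size_map size_iota. Qed.

Lemma big_ord_int_range {V : nmodType} a n (F : int -> V) :
  \sum_(k < n) F (a + k%:Z) = \sum_(x <- int_range a n) F x.
Proof. by rewrite big_map -(big_mkord xpredT (fun k => F (a + k%:Z))) /index_iota subn0. Qed.

Lemma big_uniq_fsbigT {V : nmodType} {T : choiceType} (r : seq T) (F : T -> V) :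
  uniq r -> (forall i, F i != 0 -> i \in r) ->
  \sum_(i <- r) F i = \sum_(i \in [set: T]) F i.
Proof.
move=> r_uniq suppF.
have -> : [set: T]%classic = [set` (predT : {pred T})]%classic by apply/seteqP.
rewrite -(@bigfs _ 0 +%R _ _ _ F r_uniq) => // i _ ir.
by apply/eqP; apply: contraNT ir; apply: suppF.
Qed.

Lemma fsbigT_int_shift {V : nmodType} c (F : int -> V) :
  \sum_(x \in [set: int]) F (x + c) = \sum_(x \in [set: int]) F x.
Proof.
rewrite [RHS](reindex_fsbigT (fun x => x + c) F) //.
by exists (fun x => x - c) => x; rewrite ?addrK ?subrK.
Qed.

Lemma big_int_range_fsbigT {V : nmodType} a n (F : int -> V) :
  (forall x, F x != 0 -> a <= x < a + n%:Z) ->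
  \sum_(x <- int_range a n) F x = \sum_(x \in [set: int]) F x.
Proof.
move=> suppF; apply: big_uniq_fsbigT (int_range_uniq _ _) _ => x.
by rewrite mem_int_range; apply: suppF.
Qed.

Lemma big_int_range_shift {V : nmodType} a n c (F : int -> V) :
  (forall x, F x != 0 -> a <= x < a + n%:Z) ->
  (forall x, F (x + c) != 0 -> a <= x < a + n%:Z) ->
  \sum_(x <- int_range a n) F x = \sum_(x <- int_range a n) F (x + c).
Proof.
by move=> suppF suppFc; rewrite !big_int_range_fsbigT ?fsbigT_int_shift.
Qed.

Lemma sumr_neq0_witness {V : nmodType} {I : Type} (r : seq I) (F : I -> V) :
  \sum_(i <- r) F i != 0 -> exists i, F i != 0.
Proof.
elim: r => [|a r IHr]; first by rewrite big_nil eqxx.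
by rewrite big_cons; have [->|] := eqVneq (F a) 0; [rewrite add0r | exists a].
Qed.

Lemma mulf_neq0_inv {K : idomainType} (x y : K) : x * y != 0 -> x != 0 /\ y != 0.
Proof. by rewrite mulf_eq0 negb_or => /andP. Qed.

Lemma cauchy_schwarz_seq {K : numDomainType} {I : Type} (r : seq I) (y : I -> K) :
  (forall i, 0 <= y i) ->
  (\sum_(i <- r) y i) ^+ 2 <= (size r)%:R * \sum_(i <- r) y i ^+ 2.
Proof.
move=> y_ge0; set S := \sum_(i <- r) y i; set Q := \sum_(i <- r) y i ^+ 2.
have sum_const (c : K) : \sum_(i <- r) c = c *+ size r.
  by rewrite big_const_seq count_predT; elim: (size r) => //= n ->; rewrite mulrS.
have diff_sqr_ge0 : 0 <= \sum_(i <- r) \sum_(j <- r) (y i - y j) ^+ 2.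
  do 2!apply: sumr_ge0 => ? _.
  by apply: real_exprn_even_ge0 => //; rewrite rpredB // ger0_real.
have diff_sqrE : \sum_(i <- r) \sum_(j <- r) (y i - y j) ^+ 2 = (Q *+ size r - S * S) *+ 2.
  under eq_bigr => i _ do under eq_bigr => j _ do rewrite sqrrB.
  rewrite (eq_bigr (fun i => y i ^+ 2 *+ size r - (y i * S) *+ 2 + Q)); last first.
    by move=> i _; rewrite !big_split /= sumrN sum_const sumrMnl -mulr_sumr.
  by rewrite !big_split /= sumrN !sumrMnl -mulr_suml sum_const mulrnBl -/S -/Q; ring.
move: diff_sqr_ge0; rewrite diff_sqrE pmulrn_lge0 // subr_ge0.
by rewrite expr2 mulr_natl.
Qed.

Lemma cauchy_schwarz_seq2 {K : numDomainType} {I J : Type} (r : seq I) (s : seq J)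
    (y : I -> J -> K) :
  (forall i j, 0 <= y i j) ->
  (\sum_(i <- r) \sum_(j <- s) y i j) ^+ 2 <=
    (size r * size s)%:R * \sum_(i <- r) \sum_(j <- s) y i j ^+ 2.
Proof.
move=> y_ge0; have := cauchy_schwarz_seq [seq (i, j) | i <- r, j <- s] (fun p => y p.1 p.2).
by rewrite !big_allpairs size_allpairs; apply=> -[].
Qed.

Lemma norm_sum_mul_le {K : numDomainType} {I : Type} (r : seq I) (a b : I -> K) :
  (forall i, `|a i| <= 1) -> `|\sum_(i <- r) a i * b i| <= \sum_(i <- r) `|b i|.
Proof.
move=> a_le1; apply: le_trans (ler_norm_sum _ _ _) _.
by apply: ler_sum => i _; rewrite normrM ler_piMl.
Qed.

Lemma sqr_norm_sum {K : numClosedFieldType} {I : Type} (r : seq I) (a : I -> K) :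
  `|\sum_(i <- r) a i| ^+ 2 = \sum_(i <- r) \sum_(j <- r) a i * (a j)^*.
Proof.
by rewrite normCK rmorph_sum mulr_suml; apply: eq_bigr => i _; rewrite mulr_sumr.
Qed.

Lemma sqr_norm_sum_mul_le {K : numDomainType} {I : Type} (r : seq I) (a b : I -> K) :
  (forall i, `|a i| <= 1) ->
  `|\sum_(i <- r) a i * b i| ^+ 2 <= (size r)%:R * \sum_(i <- r) `|b i| ^+ 2.
Proof.
move=> a_le1; apply: le_trans (cauchy_schwarz_seq _ _ (fun i => normr_ge0 (b i))).
by apply: lerXn2r; rewrite ?nnegrE ?sumr_ge0 ?norm_sum_mul_le.
Qed.

Lemma sqr_norm_sum2_mul_le {K : numDomainType} {I J : Type} (r : seq I) (s : seq J)
    (a b : I -> J -> K) :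
  (forall i j, `|a i j| <= 1) ->
  `|\sum_(i <- r) \sum_(j <- s) a i j * b i j| ^+ 2 <=
    (size r * size s)%:R * \sum_(i <- r) \sum_(j <- s) `|b i j| ^+ 2.
Proof.
move=> a_le1; have := sqr_norm_sum_mul_le [seq (i, j) | i <- r, j <- s]
  (fun p => a p.1 p.2) (fun p => b p.1 p.2).
by rewrite !big_allpairs size_allpairs; apply=> -[].
Qed.

Lemma window_poly_bound {F : realFieldType} (n : F) : 1 <= n ->
  (10 * n ^+ 2 + 1) ^+ 8 * (2 * n + 1) ^+ 4 * n ^+ 4 <=
  5 ^+ 8 * ((4 * n ^+ 2 + 1) * n) ^+ 8.
Proof.
move=> n_ge1; have n2_ge1 : 1 <= n ^+ 2 := exprn_ege1 2 n_ge1.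
have pow_le (x y : F) k : 0 <= x -> x <= y -> x ^+ k <= y ^+ k.
  by move=> x_ge0 x_le_y; apply: lerXn2r; rewrite ?nnegrE ?(le_trans x_ge0).
apply: le_trans (_ : (11 * n ^+ 2) ^+ 8 * (3 * n) ^+ 4 * n ^+ 4 <= _).
  apply: ler_wpM2r; first by apply: exprn_ge0; lra.
  by apply: ler_pM; [apply: exprn_ge0 | apply: exprn_ge0 | apply: pow_le | apply: pow_le]; lra.
have -> : (11 * n ^+ 2) ^+ 8 * (3 * n) ^+ 4 * n ^+ 4 = 363 ^+ 4 * n ^+ 24 by ring.
apply: le_trans (_ : 400 ^+ 4 * n ^+ 24 <= _).
  by apply: ler_wpM2r; [apply: exprn_ge0; lra | apply: pow_le; lra].
have -> : 400 ^+ 4 * n ^+ 24 = 5 ^+ 8 * (4 * n ^+ 3) ^+ 8 by ring.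
apply: ler_wpM2l; first by apply: exprn_ge0; lra.
by apply: pow_le; [apply: mulr_ge0; [lra | apply: exprn_ge0; lra] | nra].
Qed.

Lemma window_size_bound (N : nat) : (0 < N)%N ->
  ((10 * N ^ 2).+1 ^ 8 * (2 * N).+1 ^ 4 * N ^ 4 <=
    5 ^ 8 * ((2 * N ^ 2).*2.+1 * N) ^ 8)%N.
Proof.
move=> N_gt0; rewrite -(ler_nat rat) 3!natrM !natrX.
have -> : ((10 * N ^ 2).+1)%:R = 10 * N%:R ^+ 2 + 1 :> rat by rewrite -natr1 natrM natrX.
have -> : ((2 * N).+1)%:R = 2 * N%:R + 1 :> rat by rewrite -natr1 natrM.
have -> : ((2 * N ^ 2).*2.+1 * N)%:R = (4 * N%:R ^+ 2 + 1) * N%:R :> rat.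
  by rewrite natrM -natr1 -mul2n mulnA natrM natrX.
by apply: window_poly_bound; rewrite ler1n.
Qed.

Lemma powR_neg_half_pow8 {R : realType} (x : R) : 0 <= x -> (x `^ (- 2^-1)) ^+ 8 = x ^- 4.
Proof.
move=> x_ge0; rewrite -powR_mulrn ?powR_ge0 // -powRrM.
by rewrite (_ : - 2^-1 * 8%:R = - 4%:R) ?powR_invn //; field.
Qed.

Lemma gowersU3_pow8 {R : realType} (f : int -> R[i]) :
  0 <= gowers3_sum f -> ((gowersU3 f) ^+ 8)%:C = gowers3_sum f.
Proof.
move=> G_ge0; have G_real : gowers3_sum f = (complex.Re (gowers3_sum f))%:C.
  by rewrite RRe_real // ger0_real.
have Re_ge0 : 0 <= complex.Re (gowers3_sum f) by rewrite -lecR -G_real.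
rewrite /gowersU3 -powR_mulrn ?powR_ge0 // -powRrM mulVf ?pnatr_eq0 //.
by rewrite powRr1 // -G_real.
Qed.

Lemma Delta_neq0 {R : rcfType} h (g : int -> R[i]) x :
  Delta h g x != 0 -> g x != 0 /\ g (x + h) != 0.
Proof. by case/mulf_neq0_inv => ->; rewrite conjC_eq0. Qed.

Section CorrelationBound.

Variables (R : realType) (N : nat) (f0 f1 f2 : int -> R[i]).
Hypotheses (f0_le1 : forall x, `|f0 x| <= 1) (f1_le1 : forall x, `|f1 x| <= 1).
Hypothesis f0_supp : supported_in f0 (in_pm (2 * (N ^ 2)%N)%:Z).
Hypothesis f1_supp : supported_in f1 (in_pm (2 * (N ^ 2)%N)%:Z).
Hypothesis f2_supp : supported_in f2 (in_1N N%:Z).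

Let f0_neq0 x : f0 x != 0 -> - (2 * N ^ 2)%N%:Z <= x <= (2 * N ^ 2)%N%:Z := @f0_supp x.
Let f1_neq0 x : f1 x != 0 -> - (2 * N ^ 2)%N%:Z <= x <= (2 * N ^ 2)%N%:Z := @f1_supp x.
Let f2_neq0 n : f2 n != 0 -> 1 <= n <= N%:Z := @f2_supp n.

Let sqr_le_N2 (n : int) : 1 <= n <= N%:Z -> 1 <= n ^+ 2 <= (N ^ 2)%N%:Z.
Proof. by move=> ?; nia. Qed.

(* Windows containing every x, resp. every n and every shift, that contributes below. *)
Definition xs := int_range (- (5 * N ^ 2)%N%:Z) (10 * N ^ 2).+1.
Definition hs := int_range (- N%:Z) (2 * N).+1.

Lemma big_hs_diff {V : nmodType} (F : int -> int -> V) :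
  (forall n m, F n m != 0 -> f2 n != 0 /\ f2 m != 0) ->
  \sum_(n <- hs) \sum_(m <- hs) F n m = \sum_(h <- hs) \sum_(n <- hs) F n (n + h).
Proof.
move=> suppF; rewrite [RHS]exchange_big /=; apply: eq_bigr => n _.
rewrite (big_int_range_shift _ _ n).
- by apply: eq_bigr => h _; rewrite addrC.
- by move=> m /suppF[/f2_neq0 ? /f2_neq0 ?]; lia.
- by move=> h /suppF[/f2_neq0 ? /f2_neq0 ?]; lia.
Qed.

Definition correlation : R[i] :=
  \sum_(x <- xs) \sum_(n <- hs) f0 x * f1 (x + n ^+ 2) * f2 n.
Definition twisted_conv x := \sum_(n <- hs) f1 (x + n ^+ 2) * f2 n.
Definition twisted_conv_diff h x :=
  \sum_(n <- hs) (f1 (x + ((n + h) ^+ 2 - n ^+ 2)))^* * Delta h f2 n.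
Definition autocorr_f1 d := \sum_(x <- xs) (f1 x)^* * f1 (x + d).
Definition Delta2_sum h k := \sum_(n <- hs) Delta k (Delta h f2) n.

Lemma avg_lemma35E :
  avg_lemma35 N f0 f1 f2 = (((2 * N ^ 2).*2.+1 * N)%:R)^-1 * correlation.
Proof.
rewrite /avg_lemma35 /correlation; congr (_ * _).
pose F x n := f0 x * f1 (x + n ^+ 2) * f2 n.
have inner x : \sum_(j < N) F x (j.+1)%:Z = \sum_(n <- hs) F x n.
  rewrite (eq_bigr (fun j : 'I_N => F x (1 + j%:Z))) => [|j _]; last by rewrite intS.
  rewrite big_ord_int_range !big_int_range_fsbigT // => n /mulf_neq0_inv[_ /f2_neq0]; lia.
rewrite (eq_bigr (fun k : 'I__ => \sum_(n <- hs) F (- (2 * N ^ 2)%N%:Z + k%:Z) n))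
  => [|k _]; last by rewrite -inner addrC.
rewrite (big_ord_int_range _ _ (fun x => \sum_(n <- hs) F x n)).
rewrite !big_int_range_fsbigT // => x.
all: by case/sumr_neq0_witness => n /mulf_neq0_inv[/mulf_neq0_inv[/f0_neq0 ? _] _]; lia.
Qed.

Lemma correlation_sqr_le :
  `|correlation| ^+ 2 <= (size xs)%:R * \sum_(x <- xs) `|twisted_conv x| ^+ 2.
Proof.
have -> : correlation = \sum_(x <- xs) f0 x * twisted_conv x.
  by apply: eq_bigr => x _; rewrite mulr_sumr; apply: eq_bigr => n _; rewrite mulrA.
exact: sqr_norm_sum_mul_le.
Qed.

Lemma sum_sqr_twisted_conv :
  \sum_(x <- xs) `|twisted_conv x| ^+ 2 =
  \sum_(h <- hs) \sum_(x <- xs) f1 x * twisted_conv_diff h x.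
Proof.
rewrite (eq_bigr _ (fun x _ => sqr_norm_sum _ _)) exchange_big /=.
under eq_bigr => n _ do rewrite exchange_big /=.
rewrite big_hs_diff => [|n m /sumr_neq0_witness[x]]; last first.
  by case/mulf_neq0_inv => /mulf_neq0_inv[_ ->]; rewrite conjC_eq0 => /mulf_neq0_inv[_ ->].
apply: eq_bigr => h _; under [RHS]eq_bigr => x _ do rewrite mulr_sumr.
rewrite [RHS]exchange_big /=; apply: eq_bigr => n _.
rewrite (big_int_range_shift _ _ (- n ^+ 2)).
- apply: eq_bigr => x _; rewrite subrK /Delta rmorphM /=.
  have -> : x - n ^+ 2 + (n + h) ^+ 2 = x + ((n + h) ^+ 2 - n ^+ 2) by ring.
  by ring.
- move=> x /mulf_neq0_inv[/mulf_neq0_inv[/f1_neq0 ? /f2_neq0 /sqr_le_N2 ?] _]; lia.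
- by move=> x /mulf_neq0_inv[/mulf_neq0_inv[]]; rewrite subrK => /f1_neq0 ? _ _; lia.
Qed.

Lemma sum_sqr_twisted_conv_diff h :
  \sum_(x <- xs) `|twisted_conv_diff h x| ^+ 2 =
  \sum_(k <- hs) autocorr_f1 (2%:Z * k * h) * Delta2_sum h k.
Proof.
rewrite (eq_bigr _ (fun x _ => sqr_norm_sum _ _)) exchange_big /=.
under eq_bigr => n _ do rewrite exchange_big /=.
rewrite big_hs_diff => [|n m /sumr_neq0_witness[x]]; last first.
  case/mulf_neq0_inv => /mulf_neq0_inv[_ /Delta_neq0[-> _]].
  by rewrite conjC_eq0 => /mulf_neq0_inv[_ /Delta_neq0[-> _]].
apply: eq_bigr => k _; rewrite /autocorr_f1 /Delta2_sum mulr_sumr.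
apply: eq_bigr => n _; rewrite mulr_suml.
rewrite (big_int_range_shift _ _ (- ((n + h) ^+ 2 - n ^+ 2))).
- apply: eq_bigr => x _; rewrite subrK.
  (* the second difference of n |-> n^2 is the constant 2kh *)
  have -> : x - ((n + h) ^+ 2 - n ^+ 2) + ((n + k + h) ^+ 2 - (n + k) ^+ 2) =
    x + 2%:Z * k * h by ring.
  by rewrite /Delta !rmorphM /= !conjCK; ring.
- move=> x /mulf_neq0_inv[/mulf_neq0_inv[]]; rewrite conjC_eq0 => /f1_neq0 ?.
  by case/Delta_neq0 => /f2_neq0/sqr_le_N2 ? /f2_neq0/sqr_le_N2 ? _; lia.
- by move=> x /mulf_neq0_inv[/mulf_neq0_inv[]]; rewrite subrK conjC_eq0 => /f1_neq0 ? _ _; lia.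
Qed.

Lemma norm_autocorr_f1_le d : `|autocorr_f1 d| <= (size xs)%:R.
Proof.
apply: le_trans (ler_norm_sum _ _ _) _; rewrite -sum1_size natr_sum.
by apply: ler_sum => x _; rewrite normrM norm_conjC mulr_ile1.
Qed.

Lemma sum_sqr_twisted_conv_diff_le :
  \sum_(h <- hs) \sum_(x <- xs) `|twisted_conv_diff h x| ^+ 2 <=
  (size xs)%:R * \sum_(h <- hs) \sum_(k <- hs) `|Delta2_sum h k|.
Proof.
rewrite mulr_sumr; apply: ler_sum => h _.
rewrite -[X in X <= _]ger0_norm; last by apply: sumr_ge0 => x _; apply: exprn_ge0.
rewrite sum_sqr_twisted_conv_diff mulr_sumr.
apply: le_trans (ler_norm_sum _ _ _) _; apply: ler_sum => k _.
by rewrite normrM ler_wpM2r ?norm_autocorr_f1_le.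
Qed.

Lemma sqr_norm_Delta2_sum h k :
  `|Delta2_sum h k| ^+ 2 = \sum_(l <- hs) \sum_(n <- hs) Delta l (Delta k (Delta h f2)) n.
Proof.
rewrite sqr_norm_sum big_hs_diff // => n m /mulf_neq0_inv[/Delta_neq0[/Delta_neq0[-> _] _]].
by rewrite conjC_eq0 => /Delta_neq0[/Delta_neq0[-> _] _].
Qed.

Lemma gowers3_sum_hs :
  gowers3_sum f2 = \sum_(h <- hs) \sum_(k <- hs) \sum_(l <- hs) \sum_(n <- hs)
                     Delta l (Delta k (Delta h f2)) n.
Proof.
pose quads := [seq (t, h) | h <- hs, t <- [seq (p, k) | k <- hs,
                 p <- [seq (n, l) | l <- hs, n <- hs]]].
have hs_uniq := int_range_uniq (- N%:Z) (2 * N).+1.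
have quads_uniq : uniq quads.
  by do 3!(apply: allpairs_uniq => //; last by move=> [? ?] [? ?] _ _ [-> ->]).
rewrite /gowers3_sum -(big_uniq_fsbigT _ _ quads_uniq); last first.
  move=> [[[n l] k] h] /= /Delta_neq0[/Delta_neq0[/Delta_neq0[/f2_neq0 ? /f2_neq0 ?]
    /Delta_neq0[/f2_neq0 ? _]] /Delta_neq0[/Delta_neq0[/f2_neq0 ? _] _]].
  by do ![apply: allpairs_f | rewrite mem_int_range; lia].
rewrite big_allpairs_dep; apply: eq_bigr => h _.
by rewrite big_allpairs_dep; apply: eq_bigr => k _; rewrite big_allpairs_dep.
Qed.

Lemma gowers3_sumE :
  gowers3_sum f2 = \sum_(h <- hs) \sum_(k <- hs) `|Delta2_sum h k| ^+ 2.
Proof.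
by rewrite gowers3_sum_hs; do 2!apply: eq_bigr => ? _; rewrite sqr_norm_Delta2_sum.
Qed.

Lemma gowers3_sum_ge0 : 0 <= gowers3_sum f2.
Proof. by rewrite gowers3_sumE; do 2!apply: sumr_ge0 => ? _; apply: exprn_ge0. Qed.

Lemma correlation_pow8_le :
  `|correlation| ^+ 8 <= (size xs)%:R ^+ 8 * (size hs)%:R ^+ 4 * gowers3_sum f2.
Proof.
set X : R[i] := (size xs)%:R; set H : R[i] := (size hs)%:R.
set A := \sum_(x <- xs) `|twisted_conv x| ^+ 2.
set q := \sum_(h <- hs) \sum_(k <- hs) `|Delta2_sum h k|.
have A_ge0 : 0 <= A by apply: sumr_ge0 => x _; apply: exprn_ge0.
have q_ge0 : 0 <= q by do 2!apply: sumr_ge0 => ? _.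
have A_sqr_le : A ^+ 2 <= H * X * (X * q).
  apply: (le_trans _ (ler_wpM2l _ sum_sqr_twisted_conv_diff_le)); last first.
    by rewrite mulr_ge0 ?ler0n.
  rewrite -(ger0_norm A_ge0) {1}/A sum_sqr_twisted_conv -natrM.
  exact: sqr_norm_sum2_mul_le.
have q_sqr_le : q ^+ 2 <= H * H * gowers3_sum f2.
  by rewrite gowers3_sumE -natrM; apply: cauchy_schwarz_seq2.
have -> : `|correlation| ^+ 8 = (`|correlation| ^+ 2) ^+ 4 by rewrite -exprM.
apply: le_trans (_ : (X * A) ^+ 4 <= _).
  apply: (@lerXn2r _ 4); rewrite ?nnegrE ?exprn_ge0 ?mulr_ge0 ?ler0n //.
  exact: correlation_sqr_le.
apply: le_trans (_ : X ^+ 4 * (H * X * (X * q)) ^+ 2 <= _).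
  rewrite [(X * A) ^+ 4]exprMn (exprM A 2 2) ler_wpM2l ?exprn_ge0 ?ler0n //.
  by apply: (@lerXn2r _ 2); rewrite ?nnegrE ?exprn_ge0 ?mulr_ge0 ?ler0n.
rewrite (_ : X ^+ 4 * _ = X ^+ 8 * H ^+ 2 * q ^+ 2); last by ring.
rewrite (_ : X ^+ 8 * H ^+ 4 * _ = X ^+ 8 * H ^+ 2 * (H * H * gowers3_sum f2)); last by ring.
by rewrite ler_wpM2l ?mulr_ge0 ?exprn_ge0 ?ler0n.
Qed.

Lemma avg_pow8_le : (0 < N)%N ->
  `|avg_lemma35 N f0 f1 f2| ^+ 8 <= 5 ^+ 8 / N%:R ^+ 4 * gowers3_sum f2.
Proof.
move=> N_gt0; set D := ((2 * N ^ 2).*2.+1 * N)%N.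
have D_gt0 : (0 < D)%N by rewrite muln_gt0 N_gt0.
rewrite avg_lemma35E -/D normrM normfV normr_nat exprMn exprVn.
rewrite mulrC ler_pdivrMr ?exprn_gt0 ?ltr0n //.
apply: le_trans correlation_pow8_le _; rewrite /xs /hs !size_int_range.
have -> : 5 ^+ 8 / N%:R ^+ 4 * gowers3_sum f2 * D%:R ^+ 8 =
    5 ^+ 8 * D%:R ^+ 8 / N%:R ^+ 4 * gowers3_sum f2 by ring.
rewrite ler_wpM2r ?gowers3_sum_ge0 // ler_pdivlMr ?exprn_gt0 ?ltr0n //.
by rewrite -!natrX -!natrM ler_nat window_size_bound.
Qed.

End CorrelationBound.

Theorem lemma3p5 (R : realType) :
  exists C : R, 0 < C /\
  forall (N : nat) (f0 f1 f2 : int -> R[i]),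
    (0 < N)%N ->
    (forall x, `|f0 x| <= 1) -> (forall x, `|f1 x| <= 1) -> (forall x, `|f2 x| <= 1) ->
    supported_in f0 (in_pm (2 * (N ^ 2)%N)%:Z) ->
    supported_in f1 (in_pm (2 * (N ^ 2)%N)%:Z) ->
    supported_in f2 (in_1N N%:Z) ->
    `|avg_lemma35 N f0 f1 f2| <= (C * powR N%:R (- 2%:R^-1) * gowersU3 f2)%:C.
Proof.
exists 5; split=> [|N f0 f1 f2 N_gt0 f0_le1 f1_le1 _ f0_supp f1_supp f2_supp].
  by rewrite ltr0n.
have G_ge0 := gowers3_sum_ge0 _ _ _ f2_supp.
rewrite -(@ler_pXn2r _ 8) // ?nnegrE ?lecR ?mulr_ge0 ?powR_ge0 //.
set r := 5 * _ * _; have -> : r%:C ^+ 8 = (r ^+ 8)%:C by rewrite rmorphXn.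
rewrite /r !exprMn powR_neg_half_pow8 ?ler0n // 2!rmorphM /= gowersU3_pow8 //.
rewrite fmorphV /= !rmorphXn /= !rmorph_nat.
by apply: avg_pow8_le.
Qed.
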